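(* Let $W$ be an sc-Banach space, $E=\mathbb R^n\oplus W$ and $C=[0,\infty)^n\oplus W$. If a finite-dimensional subspace $N\subset E$ is neat with respect to $C$, then $N$ is in good position to $C$ and $C\cap N$ is a partial quadrant in $N$.
   Context: An sc-Banach space is a Banach space $W$ with a nested sequence of Banach spaces $W=W_0\supset W_1\supset\cdots$ with compact inclusions $W_n\to W_m$ ($m<n$) and $\bigcap W_m$ dense in each $W_m$; $E=\mathbb R^n\oplus W$ has levels $\mathbb R^n\oplus W_m$, and $\|\cdot\|$ is its level-$0$ norm. An sc-complement of a closed subspace $N$ is a closed subspace $N^\perp$ with $E_m=(N\cap E_m)\oplus(N^\perp\cap E_m)$ topologically for every $m$, both being sc-subspaces (i.e. their intersections with the levels form sc-structures). A finite-dimensional subspace $N$ is neat with respect to $C$ if it has an sc-complement $N^\perp$ with $N^\perp\subset C$. $N$ is in good position to $C$ if $N\cap C$ has nonempty interior in $N$ and there exist an sc-complement $N^\perp$ and $c>0$ such that for $(n,m)\in N\oplus N^\perp$ with $\|m\|\le c\|n\|$: $n+m\in C$ iff $n\in C$. A partial quadrant in a finite-dimensional space $N$ is the image of $[0,\infty)^k\oplus\mathbb R^{d-k}$ under a linear isomorphism $\mathbb R^d\to N$. *)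

From HB Require Import structures.
From mathcomp Require Import all_boot all_order all_algebra.
From mathcomp Require Import all_classical all_reals all_analysis.
Set Implicit Arguments. Unset Strict Implicit. Unset Printing Implicit Defensive.
Import Order.TTheory GRing.Theory Num.Theory.
Import numFieldNormedType.Exports.
Local Open Scope classical_set_scope.
Local Open Scope ring_scope.

Section Generic.
Variables (R : realType) (V : lmodType R).

Definition lin_subspace (A : set V) : Prop :=
  A 0 /\ forall (a : R) x y, A x -> A y -> A (a *: x + y).

Definition is_norm_on (A : set V) (nrm : V -> R) : Prop :=
  [/\ forall x, A x -> 0 <= nrm x,
      forall x, A x -> nrm x = 0 -> x = 0,
      forall (a : R) x, A x -> nrm (a *: x) = `|a| * nrm x
    & forall x y, A x -> A y -> nrm (x + y) <= nrm x + nrm y].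

Definition cvg_nrm (nrm : V -> R) (u : nat -> V) (x : V) : Prop :=
  (fun k => nrm (u k - x)) @ \oo --> (0 : R).

Definition cauchy_nrm (nrm : V -> R) (u : nat -> V) : Prop :=
  forall e : R, 0 < e -> exists N : nat, forall j k : nat,
    (N <= j)%N -> (N <= k)%N -> nrm (u j - u k) < e.

Definition complete_nrm (A : set V) (nrm : V -> R) : Prop :=
  forall u : nat -> V, (forall k, A (u k)) -> cauchy_nrm nrm u ->
    exists2 x, A x & cvg_nrm nrm u x.

Definition closed_nrm (A S : set V) (nrm : V -> R) : Prop :=
  forall (u : nat -> V) x, (forall k, A (u k)) -> S x -> cvg_nrm nrm u x -> A x.

Definition dense_nrm (D S : set V) (nrm : V -> R) : Prop :=
  forall x, S x -> forall e : R, 0 < e -> exists2 y, D y & nrm (x - y) < e.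

Definition compact_incl (S1 : set V) (n1 : V -> R) (S2 : set V) (n2 : V -> R)
  : Prop :=
  S1 `<=` S2 /\
  forall u : nat -> V, (forall k, S1 (u k)) ->
    (exists M : R, forall k, n1 (u k) <= M) ->
    exists phi : nat -> nat, (forall k, (phi k < phi k.+1)%N) /\
      exists2 x, S2 x & cvg_nrm n2 (u \o phi) x.

Definition is_sc_structure (lev : nat -> set V) (nrm : nat -> V -> R) : Prop :=
  [/\ forall m, lin_subspace (lev m),
      forall m, is_norm_on (lev m) (nrm m),
      forall m, complete_nrm (lev m) (nrm m),
      forall m k, (m < k)%N -> compact_incl (lev k) (nrm k) (lev m) (nrm m)
    & forall m, dense_nrm (\bigcap_k lev k) (lev m) (nrm m)].

Definition topo_direct_sum (S A B : set V) (nrm : V -> R) : Prop :=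
  [/\ A `<=` S, B `<=` S,
      forall x, S x -> exists a b, [/\ A a, B b & x = a + b],
      forall x, A x -> B x -> x = 0
    & exists K : R, forall a b, A a -> B b -> nrm a <= K * nrm (a + b)].

End Generic.

Definition sc_Banach (R : realType) (W : normedModType R)
  (lev : nat -> set W) (nrm : nat -> W -> R) : Prop :=
  [/\ lev 0%N = setT, (forall x, nrm 0%N x = `|x|) & is_sc_structure lev nrm].

Section Ambient.
Variables (R : realType) (W : normedModType R) (n : nat).
Variables (lev : nat -> set W) (nrm : nat -> W -> R).

Notation Esp := (matrix R 1 n * W)%type.

Definition Elev (m : nat) : set Esp := [set x | lev m x.2].
Definition Enrm (m : nat) (x : Esp) : R := Num.max `|x.1| (nrm m x.2).

Definition Cquad : set Esp := [set x : Esp | forall i : 'I_n, 0 <= (x.1 : 'rV[R]_n) ord0 i].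

Definition finite_dim (N : set Esp) : Prop :=
  exists (d : nat) (b : 'I_d -> Esp),
    N = [set x | exists c : 'I_d -> R, x = \sum_(i < d) c i *: b i].

Definition sc_subspace (F : set Esp) : Prop :=
  is_sc_structure (fun m => F `&` Elev m) Enrm.

Definition sc_complement (N N' : set Esp) : Prop :=
  [/\ lin_subspace N', closed_nrm N' setT (Enrm 0%N),
      forall m, topo_direct_sum (Elev m) (N `&` Elev m) (N' `&` Elev m) (Enrm m),
      sc_subspace N & sc_subspace N'].

Definition neat (N : set Esp) (C : set Esp) : Prop :=
  exists N', sc_complement N N' /\ N' `<=` C.

Definition good_position (N : set Esp) (C : set Esp) : Prop :=
  (exists2 x, (N `&` C) x &
     exists2 e : R, 0 < e & forall y, N y -> Enrm 0%N (y - x) < e -> C y) /\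
  exists N', sc_complement N N' /\
    exists2 c : R, 0 < c & forall u v, N u -> N' v ->
      Enrm 0%N v <= c * Enrm 0%N u -> (C (u + v) <-> C u).

Definition partial_quadrant (N : set Esp) (Q : set Esp) : Prop :=
  exists (d k : nat) (L : 'rV[R]_d -> Esp),
    [/\ (k <= d)%N,
        forall (a : R) u v, L (a *: u + v) = a *: L u + L v,
        injective L,
        L @` setT = N
      & Q = L @` [set v : 'rV[R]_d | forall i : 'I_d, (i < k)%N -> 0 <= v ord0 i]].

End Ambient.

From HB Require Import structures.
From mathcomp Require Import all_boot all_order all_algebra.
From mathcomp Require Import all_classical all_reals all_analysis.
Set Implicit Arguments. Unset Strict Implicit. Unset Printing Implicit Defensive.
Import Order.TTheory GRing.Theory Num.Theory.
Import numFieldNormedType.Exports.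
Local Open Scope classical_set_scope.
Local Open Scope ring_scope.

(* The complement N' is a linear subspace contained in C = [0,oo)^n (+) W, so
   it lies in 0 (+) W.  Hence the splitting E = N (+) N' makes the projection
   N -> R^n onto, and adding a vector of N' never changes the R^n-component,
   which alone decides membership in C: N is in good position, with any c.
   A linear section s of that projection together with an injective linear
   parametrisation K of its kernel N `&` (0 (+) W) gives a chart
   (r, z) |-> s r + K z of N whose R^n-component is r; it maps
   [0,oo)^n (+) R^k onto C `&` N. *)

Section LinearMaps.
Variables (R : pzRingType) (U V : lmodType R) (f : U -> V).
Hypothesis f_lin : linear f.

Lemma lin_map0 : f 0 = 0.
Proof. by have := f_lin (-1) 0 0; rewrite scaler0 add0r scaleN1r addNr. Qed.

Lemma lin_mapD u v : f (u + v) = f u + f v.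
Proof. by have := f_lin 1 u v; rewrite !scale1r. Qed.

Lemma lin_mapZ a u : f (a *: u) = a *: f u.
Proof. by rewrite -[a *: u]addr0 f_lin lin_map0 addr0. Qed.

Lemma lin_mapB u v : f (u - v) = f u - f v.
Proof. by rewrite lin_mapD -scaleN1r lin_mapZ scaleN1r. Qed.

End LinearMaps.

Section BlockMaps.
Variables (R : pzRingType) (V : lmodType R) (p q : nat).
Variables (F : 'rV[R]_p -> V) (G : 'rV[R]_q -> V).

Definition block_map (w : 'rV[R]_(p + q)) : V := F (lsubmx w) + G (rsubmx w).

Lemma block_map_row_mx x y : block_map (row_mx x y) = F x + G y.
Proof. by rewrite /block_map row_mxKl row_mxKr. Qed.

Lemma range_block_map v : range block_map v <-> exists x y, F x + G y = v.
Proof.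
split=> [[w _ <-]|[x [y <-]]]; first by exists (lsubmx w), (rsubmx w).
by exists (row_mx x y); rewrite ?block_map_row_mx.
Qed.

Hypotheses (F_lin : linear F) (G_lin : linear G).

Lemma block_map_linear : linear block_map.
Proof.
move=> a u v; rewrite /block_map !linearD !linearZ /= F_lin G_lin.
by rewrite scalerDr addrACA.
Qed.

Lemma block_map_inj : injective F -> injective G ->
  (forall x y, F x = G y -> F x = 0) -> injective block_map.
Proof.
move=> F_inj G_inj FG0 u v; rewrite -[u]hsubmxK -[v]hsubmxK !block_map_row_mx.
move: (lsubmx u) (rsubmx u) (lsubmx v) (rsubmx v) => x y x' y' Euv.
have FG : F (x - x') = G (y' - y).
  rewrite (lin_mapB F_lin) (lin_mapB G_lin); apply/eqP.
  by rewrite subr_eq addrAC [G y' + _]addrC -Euv addrK.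
have Fx0 := FG0 _ _ FG; rewrite Fx0 -(lin_map0 G_lin) in FG.
rewrite -(lin_map0 F_lin) in Fx0.
move: Fx0 FG => /F_inj/eqP; rewrite subr_eq0 => /eqP <- /G_inj/eqP.
by rewrite eq_sym subr_eq0 => /eqP <-.
Qed.

End BlockMaps.

Section LinearRange.
Variables (R : fieldType) (V : lmodType R).

Definition scale_row (b : V) (c : 'rV[R]_1) : V := c 0 0 *: b.

Lemma scale_row_linear b : linear (scale_row b).
Proof. by move=> a c c'; rewrite /scale_row !mxE scalerDl scalerA. Qed.

Lemma linear_row_split d (f : 'rV[R]_(1 + d) -> V) : linear f ->
  f =1 block_map (scale_row (f (row_mx 1 0))) (f \o row_mx 0).
Proof.
move=> f_lin w; rewrite /block_map /scale_row /= -(lin_mapZ f_lin).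
rewrite -(lin_mapD f_lin) scale_row_mx scaler0 add_row_mx add0r addr0.
by rewrite scalemx1 -mx11_scalar hsubmxK.
Qed.

Lemma block_scale_row_inj d b (L : 'rV[R]_d -> V) : linear L -> injective L ->
  ~ range L b -> injective (block_map (scale_row b) L).
Proof.
move=> L_lin L_inj Lb.
apply: block_map_inj => //; first exact: scale_row_linear.
  move=> c c'; rewrite /scale_row => /eqP; rewrite -subr_eq0 -scalerBl.
  rewrite scaler_eq0 subr_eq0 => /orP[/eqP cc'|/eqP b0].
    by rewrite [c]mx11_scalar [c']mx11_scalar cc'.
  by case: Lb; exists 0; rewrite // (lin_map0 L_lin).
rewrite /scale_row => c y cbL; apply/eqP; rewrite scaler_eq0.
apply/contraT => /norP[c0 _]; case: Lb; exists ((c 0 0)^-1 *: y) => //.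
by rewrite (lin_mapZ L_lin) -cbL scalerA mulVf // scale1r.
Qed.

(* Induction on d0: writing f (c, u) = c b + g u, the first basis vector b is
   kept only when it is not already in the range of the chart of g. *)
Lemma linear_range_inj d0 (f : 'rV[R]_d0 -> V) : linear f ->
  exists d (L : 'rV[R]_d -> V), [/\ linear L, injective L & range L = range f].
Proof.
elim: d0 f => [|d0 IH] f f_lin.
  by exists 0%N, f; split=> // u v _; rewrite (thinmx0 u) (thinmx0 v).
move: f f_lin; rewrite -[d0.+1]add1n => f f_lin.
set b := f (row_mx 1 0); set g := f \o row_mx (0 : 'rV_1).
have g_lin : linear g.
  move=> a u v; rewrite /g /= -f_lin; congr f; apply/matrixP=> i j.
  by rewrite !mxE; case: splitP => k _; rewrite !mxE ?mulr0 ?addr0.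
have [d [L' [L'_lin L'_inj L'g]]] := IH g g_lin.
have rangef v : range f v <-> exists (c : 'rV_1) y, c 0 0 *: b + L' y = v.
  split=> [[w _ <-]|[c [y <-]]].
    have [y _ L'y] : range L' (g (rsubmx w)) by rewrite L'g; exists (rsubmx w).
    by exists (lsubmx w), y; rewrite L'y (linear_row_split f_lin).
  have [y' _ gy'] : range g (L' y) by rewrite -L'g; exists y.
  exists (row_mx c y') => //; rewrite (linear_row_split f_lin) /block_map.
  by rewrite row_mxKl row_mxKr -gy'.
have [[z0 _ L'z0]|b_out] := pselect (range L' b).
  exists d, L'; split=> //; apply/seteqP; split=> v.
    by move=> [y _ <-]; apply/rangef; exists 0, y; rewrite mxE scale0r add0r.
  move=> /rangef[c [y <-]]; exists (c 0 0 *: z0 + y) => //.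
  by rewrite L'_lin L'z0.
exists (1 + d)%N, (block_map (scale_row b) L'); split.
- exact: block_map_linear (scale_row_linear b) L'_lin.
- exact: block_scale_row_inj.
- apply/seteqP; split=> v.
    by move/range_block_map/rangef.
  by move/rangef/range_block_map.
Qed.

End LinearRange.

Section LinSubspace.
Variables (R : realType) (V : lmodType R) (S : set V).
Hypothesis S_lin : lin_subspace S.

Lemma lin_subspaceZ a x : S x -> S (a *: x).
Proof.
by case: S_lin => S0 Slin Sx; have := Slin a x 0 Sx S0; rewrite addr0.
Qed.

Lemma lin_subspaceD x y : S x -> S y -> S (x + y).
Proof.
by case: S_lin => _ Slin Sx Sy; have := Slin 1 x y Sx Sy; rewrite scale1r.
Qed.

Lemma lin_subspaceB x y : S x -> S y -> S (x - y).
Proof.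
move=> Sx Sy; rewrite -scaleN1r.
by apply: lin_subspaceD => //; apply: lin_subspaceZ.
Qed.

Lemma lin_subspace_sum (I : finType) (F : I -> V) :
  (forall i, S (F i)) -> S (\sum_i F i).
Proof.
by move=> SF; elim/big_ind: _ => //; [case: S_lin | exact: lin_subspaceD].
Qed.

End LinSubspace.

Lemma ler_mx_norm_entry (R : realDomainType) m n (A : 'M[R]_(m, n)) i j :
  `|A i j| <= `|A|.
Proof.
by rewrite [X in _ <= X]mx_normrE; apply/bigmax_geP; right; exists (i, j).
Qed.

Section Quadrant.
Variables (R : realType) (W : normedModType R) (n : nat).
Notation E := ('rV[R]_n * W)%type.
Notation C := (@Cquad R W n).

Lemma fst_sum (I : finType) (F : I -> E) : (\sum_i F i).1 = \sum_i (F i).1.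
Proof. exact: (big_morph fst). Qed.

Lemma lin_subspace_Cquad_fst (S : set E) :
  lin_subspace S -> S `<=` C -> forall v, S v -> v.1 = 0.
Proof.
move=> S_lin SC v Sv; apply/rowP => j; rewrite mxE; apply/eqP.
rewrite eq_le SC // andbT -oppr_ge0.
by have := SC _ (lin_subspaceZ S_lin (-1) Sv) j; rewrite scaleN1r /= mxE.
Qed.

Lemma CquadDr u v : v.1 = 0 -> C (u + v) <-> C u.
Proof. by move=> v0; rewrite /Cquad /= v0 addr0. Qed.

Lemma Cquad_near_ones (y : E) : `|y.1 - const_mx 1| < 1 -> C y.
Proof.
move=> y1 j; have := le_lt_trans (ler_mx_norm_entry _ 0 j) y1.
by rewrite !mxE ltr_norml ltrBrDr addNr => /andP[/ltW].
Qed.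

End Quadrant.

Section Chart.
Variables (R : realType) (W : normedModType R) (n : nat).
Notation E := ('rV[R]_n * W)%type.
Variable N : set E.
Hypothesis N_lin : lin_subspace N.
Hypothesis N_fst_surj : forall r : 'rV[R]_n, exists2 a, N a & a.1 = r.

Lemma fst_section : exists s : 'rV[R]_n -> E,
  [/\ linear s, forall r, N (s r) & forall r, (s r).1 = r].
Proof.
have /choice[a Na] : forall j : 'I_n, exists a, N a /\ a.1 = 'e_j.
  by move=> j; have [a ? ?] := N_fst_surj 'e_j; exists a.
exists (fun r => \sum_j r 0 j *: a j); split.
- move=> c u v; rewrite scaler_sumr -big_split; apply: eq_bigr => j _ /=.
  by rewrite !mxE scalerDl scalerA.
- move=> r; apply: lin_subspace_sum => // j.
  by apply: lin_subspaceZ => //; case: (Na j).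
- move=> r; rewrite fst_sum [RHS]row_sum_delta; apply: eq_bigr => j _ /=.
  by case: (Na j) => _ ->.
Qed.

Lemma fst_kernel_param : finite_dim N -> forall s : 'rV[R]_n -> E,
  linear s -> (forall r, N (s r)) -> (forall r, (s r).1 = r) ->
  exists d (K : 'rV[R]_d -> E),
    [/\ linear K, injective K & range K = N `&` [set x | x.1 = 0]].
Proof.
move=> [d0 [b Nb]] s s_lin Ns s_fst.
pose B (c : 'rV[R]_d0) := \sum_i c 0 i *: b i.
have NB c : N (B c) by rewrite Nb; exists (c 0).
have B_lin : linear B.
  move=> a u v; rewrite /B scaler_sumr -big_split; apply: eq_bigr => j _ /=.
  by rewrite !mxE scalerDl scalerA.
(* [h c] is the component of [B c] in [N `&` (0 (+) W)] along the section. *)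
pose h c := B c - s (B c).1.
have h_lin : linear h.
  by move=> a u v; rewrite /h B_lin /= s_lin scalerBr addrACA opprD.
have [d [K [K_lin K_inj Kh]]] := linear_range_inj h_lin.
exists d, K; split=> //; rewrite Kh; apply/seteqP; split=> x.
  move=> [c _ <-]; split; first by apply: lin_subspaceB.
  by rewrite /h /= s_fst subrr.
move=> [Nx x0]; move: (Nx); rewrite Nb => -[c xc].
exists (\row_i c i) => //; rewrite /h.
have -> : B (\row_i c i) = x by rewrite xc; apply: eq_bigr => i _; rewrite mxE.
by rewrite x0 (lin_map0 s_lin) subr0.
Qed.

Lemma fst_chart : finite_dim N -> exists k (L : 'rV[R]_(n + k) -> E),
  [/\ linear L, injective L, range L = N & forall w, (L w).1 = lsubmx w].
Proof.
move=> N_fin; have [s [s_lin Ns s_fst]] := fst_section.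
have [k [K [K_lin K_inj KN0]]] := fst_kernel_param N_fin s_lin Ns s_fst.
have K_ker z : (N `&` [set x | x.1 = 0]) (K z) by rewrite -KN0; exists z.
have K0 z : (K z).1 = 0 by case: (K_ker z).
have L_fst w : (block_map s K w).1 = lsubmx w by rewrite /= K0 addr0 s_fst.
exists k, (block_map s K); split=> //.
- exact: block_map_linear.
- apply: block_map_inj => //.
    by move=> u v suv; rewrite -[u]s_fst -[v]s_fst suv.
  by move=> r z srKz; rewrite -[r]s_fst srKz K0 (lin_map0 s_lin).
- apply/seteqP; split=> x.
    move=> [w _ <-]; apply: lin_subspaceD => //.
    by case: (K_ker (rsubmx w)).
  move=> Nx; have [z _ Kz] : range K (x - s x.1).
    by rewrite KN0; split; [apply: lin_subspaceB | rewrite /= s_fst subrr].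
  by exists (row_mx x.1 z); rewrite // block_map_row_mx Kz addrC subrK.
Qed.

End Chart.

Lemma partial_quadrant_of_chart (R : realType) (W : normedModType R) n k
    (N : set ('rV[R]_n * W)) (L : 'rV[R]_(n + k) -> 'rV[R]_n * W) :
  linear L -> injective L -> range L = N -> (forall w, (L w).1 = lsubmx w) ->
  partial_quadrant N (@Cquad R W n `&` N).
Proof.
move=> L_lin L_inj LN L_fst; exists (n + k)%N, n, L; split=> //.
  exact: leq_addr.
rewrite -LN; apply/seteqP; split=> [x [Cx [w _ Lwx]]|x [w w_ge0 <-]].
  exists w => // i /= ilt.
  have -> : i = lshift k (Ordinal ilt) by exact: val_inj.
  by rewrite -(hsubmxK w) row_mxEl -L_fst Lwx; apply: Cx.
split; last by exists w.
by move=> j; rewrite L_fst mxE; apply: w_ge0; rewrite /= ltn_ord.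
Qed.

Section Complement.
Variables (R : realType) (W : normedModType R) (n : nat).
Variables (lev : nat -> set W) (nrm : nat -> W -> R).
Variables (N N' : set ('rV[R]_n * W)).
Hypothesis N_compl : sc_complement lev nrm N N'.
Hypothesis N'_fst : forall v, N' v -> v.1 = 0.

Lemma complement_fst_surj : lev 0%N = setT ->
  forall r : 'rV[R]_n, exists2 a, N a & a.1 = r.
Proof.
move=> lev0 r; have [_ _ /(_ 0%N)[_ _ decomp _ _] _ _] := N_compl.
have [|a [c [[Na _] [N'c _] rac]]] := decomp (r, 0).
  by rewrite /Elev lev0.
exists a => //; move: rac => /(congr1 fst) /= ->.
by rewrite (N'_fst N'c) addr0.
Qed.

Lemma good_position_Cquad : (forall r : 'rV[R]_n, exists2 a, N a & a.1 = r) ->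
  good_position lev nrm N (@Cquad R W n).
Proof.
move=> N_fst_surj; split; last first.
  exists N'; split=> //; exists 1 => // u v _ N'v _.
  by apply: CquadDr; apply: N'_fst.
have [a Na a1] := N_fst_surj (const_mx 1).
exists a; first by split=> //; apply: Cquad_near_ones; rewrite a1 subrr normr0.
exists 1 => // y _ ya; apply: Cquad_near_ones; rewrite -a1.
by apply: le_lt_trans ya; rewrite /Enrm le_max lexx.
Qed.

End Complement.

Theorem proposition6p2 (R : realType) (W : normedModType R) (n : nat)
  (lev : nat -> set W) (nrm : nat -> W -> R) (N : set ('rV[R]_n * W)%type) :
  sc_Banach lev nrm ->
  lin_subspace N -> @finite_dim R W n N ->
  @neat R W n lev nrm N (@Cquad R W n) ->
  @good_position R W n lev nrm N (@Cquad R W n) /\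
  @partial_quadrant R W n N (@Cquad R W n `&` N).
Proof.
move=> [lev0 _ _] N_lin N_fin [N' [N_compl N'C]].
have N'_fst : forall v, N' v -> v.1 = 0.
  by case: N_compl => N'_lin _ _ _ _; exact: lin_subspace_Cquad_fst N'C.
have N_fst_surj := complement_fst_surj N_compl N'_fst lev0.
split; first exact: good_position_Cquad N_compl N'_fst N_fst_surj.
have [k [L [L_lin L_inj LN L_fst]]] := fst_chart N_lin N_fst_surj N_fin.
exact: partial_quadrant_of_chart L_lin L_inj LN L_fst.
Qed.
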